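(* Let $G$ be an unweighted digraph without loops having a reciprocal leaf $i$, and let $\widetilde G$ be the digraph obtained from $G$ by deleting vertex $i$ together with the two edges joining it to the rest of $G$. Let $M(t)$ and $\widetilde M(t)$ be the directed deformed graph Laplacians of $G$ and $\widetilde G$. Then $M(t)$ and $\widetilde M(t)$ have the same finite eigenvalues, with the same algebraic and the same geometric multiplicities.
   Context: A digraph $G=(V,E)$, no loops or multiple edges, adjacency matrix $A$ ($A_{ij}=1$ iff $(i,j)\in E$); $S=A\circ A^T$, $D=\mathrm{diag}(\mathrm{diag}(A^2))$; directed deformed graph Laplacian $M(t)=I-At+(D-I)t^2+(A-S)t^3$. A vertex $i$ is a reciprocal leaf if there is exactly one vertex $j\neq i$ with $(i,j)\in E$ or $(j,i)\in E$, and both $(i,j),(j,i)\in E$. For a regular square polynomial matrix $M(t)$, a finite eigenvalue $\lambda$ is a root of $\det M(t)$, its algebraic multiplicity is its multiplicity as such a root, and its geometric multiplicity is $\dim\ker M(\lambda)$. *)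

From HB Require Import structures.
From mathcomp Require Import all_boot all_order all_algebra all_field.
Set Implicit Arguments. Unset Strict Implicit. Unset Printing Implicit Defensive.
Import Order.TTheory GRing.Theory Num.Theory.
Local Open Scope ring_scope.

(* A digraph on the vertex set 'I_n is an edge relation e : rel 'I_n;
   (i,j) is an edge iff e i j.  No multiple edges by construction; no loops
   is the hypothesis [irreflexive e]. *)

Definition adjmx n (e : rel 'I_n) : 'M[algC]_n := \matrix_(i, j) (e i j)%:R.

Definition symmx n (A : 'M[algC]_n) : 'M[algC]_n := \matrix_(i, j) (A i j * A j i).

Definition diagsq n (A : 'M[algC]_n) : 'M[algC]_n :=
  \matrix_(i, j) ((i == j)%:R * (A *m A) i i).

Definition deformed_laplacian n (e : rel 'I_n) : 'M[{poly algC}]_n :=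
  let A := adjmx e in
  map_mx polyC 1%:M - 'X *: map_mx polyC A
  + 'X^2 *: map_mx polyC (diagsq A - 1%:M)
  + 'X^3 *: map_mx polyC (A - symmx A).

Definition charM n (e : rel 'I_n) : {poly algC} := \det (deformed_laplacian e).

Definition evalM n (e : rel 'I_n) (l : algC) : 'M[algC]_n :=
  map_mx (horner^~ l) (deformed_laplacian e).

Definition finite_eigenvalue n (e : rel 'I_n) (l : algC) : bool := root (charM e) l.

Definition alg_mult n (e : rel 'I_n) (l : algC) : nat := mup l (charM e).

(* geometric multiplicity: dim ker M(l) = dim {v | M(l) v = 0}
   = dim of the row kernel of M(l)^T *)
Definition geom_mult n (e : rel 'I_n) (l : algC) : nat :=
  \rank (kermx (evalM e l)^T).

Definition reciprocal_leaf n (e : rel 'I_n) (i : 'I_n) : Prop :=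
  exists j, [/\ j != i, e i j, e j i &
             forall k, k != i -> (e i k || e k i) -> k = j].

Definition delete_vertex n (e : rel 'I_n.+1) (i : 'I_n.+1) : rel 'I_n :=
  fun x y => e (lift i x) (lift i y).

From HB Require Import structures.
From mathcomp Require Import all_boot all_order all_algebra all_field.
From mathcomp Require Import perm ring.
Import Order.TTheory GRing.Theory Num.Theory.
Set Implicit Arguments. Unset Strict Implicit.
Local Open Scope ring_scope.

(* Let i be a reciprocal leaf attached to j.  Then (A^2)_ii = 1 and i carries
   no loop, so M(t)_ii = 1, while the only other nonzero entries of row and
   column i are M(t)_ij = M(t)_ji = -t.  Moving i to the front, M(t) has a
   unit top-left corner, and its Schur complement M_jj(t) - t^2 at j exactly
   compensates the loss of the 2-cycle i -> j -> i in (A^2)_jj: the Schur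
   complement is the Laplacian of the graph with i deleted.

   Hence det M(t) = det M~(t) (same eigenvalues with the same algebraic
   multiplicities) and rank M(l) = rank M~(l) + 1 (same kernel dimensions). *)

Definition schur_compl (R : pzRingType) m n (B : 'M[R]_(m + n)) : 'M[R]_n :=
  drsubmx B - dlsubmx B *m ursubmx B.

Section SchurComplement.
Variables (m n : nat).

Lemma schur_factor (R : comNzRingType) (B : 'M[R]_(m + n)) : ulsubmx B = 1%:M ->
  B = block_mx 1%:M 0 (dlsubmx B) 1%:M *m
      (block_mx 1%:M 0 0 (schur_compl B) *m block_mx 1%:M (ursubmx B) 0 1%:M).
Proof.
move=> B11; rewrite [LHS](esym (submxK B)) B11 !mulmx_block.
by rewrite !(mul1mx, mul0mx, mulmx0, mulmx1, addr0, add0r) addrC subrK.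
Qed.

Lemma det_schur (R : comNzRingType) (B : 'M[R]_(m + n)) : ulsubmx B = 1%:M ->
  \det B = \det (schur_compl B).
Proof.
move=> B11; rewrite [in LHS](schur_factor B11) !det_mulmx det_lblock !det_ublock.
by rewrite !det1 !(mul1r, mulr1).
Qed.

Lemma rank_schur (F : fieldType) (B : 'M[F]_(m + n)) : ulsubmx B = 1%:M ->
  \rank B = (m + \rank (schur_compl B))%N.
Proof.
move=> B11; rewrite [in LHS](schur_factor B11).
have unit_l : block_mx 1%:M 0 (dlsubmx B) 1%:M \in unitmx.
  by rewrite unitmxE det_lblock !det1 mulr1 unitr1.
have unit_u : block_mx 1%:M (ursubmx B) 0 1%:M \in unitmx.
  by rewrite unitmxE det_ublock !det1 mulr1 unitr1.
rewrite eqmxMfull ?row_full_unit // mxrankMfree ?row_free_unit //.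
by rewrite rank_diag_block_mx mxrank1.
Qed.

Lemma map_schur_compl (R T : comNzRingType) (f : {rmorphism R -> T})
    (B : 'M[R]_(m + n)) :
  map_mx f (schur_compl B) = schur_compl (map_mx f B).
Proof.
by rewrite /schur_compl map_mxB map_mxM map_drsubmx map_dlsubmx map_ursubmx.
Qed.

End SchurComplement.

Lemma schur_compl1E (R : pzRingType) n (B : 'M[R]_(1 + n)) x y :
  schur_compl B x y =
  B (rshift 1 x) (rshift 1 y) - B (rshift 1 x) (lshift n 0) * B (lshift n 0) (rshift 1 y).
Proof. by rewrite !mxE big_ord1 !mxE. Qed.

Lemma det_conj_perm (R : comNzRingType) n (s : 'S_n) (A : 'M[R]_n) :
  \det (row_perm s (col_perm s A)) = \det A.
Proof.
rewrite row_permE col_permE !det_mulmx !det_perm odd_permV mulrCA -expr2.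
by rewrite -exprM mulnC exprM sqrrN !expr1n mulr1.
Qed.

Lemma rank_conj_perm (F : fieldType) n (s : 'S_n) (A : 'M[F]_n) :
  \rank (row_perm s (col_perm s A)) = \rank A.
Proof.
rewrite row_permE col_permE eqmxMfull ?row_full_unit ?unitmx_perm //.
by rewrite mxrankMfree ?row_free_unit ?unitmx_perm.
Qed.

(* Entrywise form of M(t), with (A^2)_xx the number of 2-cycles through x. *)
Lemma deformed_laplacianE n (e : rel 'I_n) x y :
  deformed_laplacian e x y =
  (x == y)%:R - 'X * (e x y)%:R
  + 'X^2 * ((x == y)%:R * (\sum_k (e x k)%:R * (e k x)%:R) - (x == y)%:R)
  + 'X^3 * ((e x y)%:R - (e x y)%:R * (e y x)%:R).
Proof.
rewrite /deformed_laplacian /diagsq /symmx /adjmx !mxE.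
under eq_bigr do rewrite !mxE.
rewrite !rmorphB !rmorphM rmorph_sum !rmorph_nat.
by under eq_bigr do rewrite rmorphM !rmorph_nat.
Qed.

Section ReciprocalLeaf.
Variables (n : nat) (e : rel 'I_n.+1) (i : 'I_n.+1) (j' : 'I_n).
Let j := lift i j'.
Let e' := delete_vertex e i.
Hypotheses (irr_e : irreflexive e) (e_ij : e i j) (e_ji : e j i).
Hypothesis leaf : forall k, k != i -> e i k || e k i -> k = j.

Lemma leaf_out_edge k : e i k = (k == j).
Proof.
have [-> //|nkj] := eqVneq k j; apply/negbTE/negP => e_ik.
have [ki|nki] := eqVneq k i; first by rewrite ki irr_e in e_ik.
by move/eqP: nkj; apply; apply: leaf; rewrite ?e_ik.
Qed.

Lemma leaf_in_edge k : e k i = (k == j).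
Proof.
have [-> //|nkj] := eqVneq k j; apply/negbTE/negP => e_ki.
have [ki|nki] := eqVneq k i; first by rewrite ki irr_e in e_ki.
by move/eqP: nkj; apply; apply: leaf; rewrite ?e_ki ?orbT.
Qed.

(* (A^2)_ii = 1: the leaf lies on exactly one 2-cycle. *)
Lemma leaf_reciprocal_degree (R : nzRingType) :
  \sum_k (e i k)%:R * (e k i)%:R = 1 :> R.
Proof.
rewrite (bigD1 j) //= e_ij e_ji mulr1 big1 ?addr0 // => k nkj.
by rewrite leaf_out_edge (negbTE nkj) mul0r.
Qed.

Lemma lift_reciprocal_degree (R : nzRingType) x :
  \sum_k (e (lift i x) k)%:R * (e k (lift i x))%:R =
  (x == j')%:R + \sum_k (e' x k)%:R * (e' k x)%:R :> R.
Proof.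
rewrite (bigD1_ord i) //=; congr (_ + _).
rewrite leaf_out_edge leaf_in_edge (inj_eq (@lift_inj _ i)).
by case: (x == j'); rewrite ?mulr1 ?mulr0.
Qed.

Lemma leaf_diag_entry : deformed_laplacian e i i = 1.
Proof.
rewrite deformed_laplacianE leaf_reciprocal_degree eqxx irr_e /=; ring.
Qed.

Lemma leaf_row_entry k : k != i -> deformed_laplacian e i k = - 'X * (k == j)%:R.
Proof.
move=> nki; rewrite deformed_laplacianE eq_sym (negbTE nki).
by rewrite leaf_out_edge leaf_in_edge; case: (k == j) => /=; ring.
Qed.

Lemma leaf_col_entry k : k != i -> deformed_laplacian e k i = - 'X * (k == j)%:R.
Proof.
move=> nki; rewrite deformed_laplacianE (negbTE nki).
by rewrite leaf_out_edge leaf_in_edge; case: (k == j) => /=; ring.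
Qed.

Let p : 'S_(1 + n) := lift_perm ord0 i 1.
Let C : 'M[{poly algC}]_(1 + n) := row_perm p (col_perm p (deformed_laplacian e)).

(* p moves the leaf to the front and the other vertices after it in order. *)
Lemma perm_first : p (lshift n (ord0 : 'I_1)) = i.
Proof.
have -> : lshift n (ord0 : 'I_1) = ord0 :> 'I_n.+1 by apply/val_inj.
by rewrite lift_perm_id.
Qed.

Lemma perm_rest x : p (rshift 1 x) = lift i x.
Proof.
have -> : rshift 1 x = lift ord0 x :> 'I_n.+1 by apply/val_inj.
by rewrite lift_perm_lift perm1.
Qed.

Lemma leaf_first_entry x y : C x y = deformed_laplacian e (p x) (p y).
Proof. by rewrite /C 2!mxE. Qed.

Lemma leaf_first_corner : ulsubmx C = 1%:M.
Proof.
apply/matrixP => a b; rewrite [LHS]mxE [LHS]mxE leaf_first_entry !ord1 perm_first.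
by rewrite leaf_diag_entry mxE.
Qed.

Lemma leaf_first_schur : schur_compl C = deformed_laplacian e'.
Proof.
apply/matrixP => x y; rewrite [RHS]deformed_laplacianE schur_compl1E.
rewrite !leaf_first_entry !perm_rest perm_first.
have lift_neq z : lift i z != i by rewrite eq_sym neq_lift.
rewrite leaf_col_entry // leaf_row_entry // deformed_laplacianE.
rewrite lift_reciprocal_degree !(inj_eq (@lift_inj _ i)).
have [<-|nxy] := eqVneq x y; first by case: (x == j') => /=; ring.
have [ex|nx] := eqVneq x j'; have [ey|ny] := eqVneq y j' => /=; try ring.
by rewrite ex ey eqxx in nxy.
Qed.

Lemma leaf_charM : charM e = charM e'.
Proof.
by rewrite /charM -(det_conj_perm p) -/C (det_schur leaf_first_corner) leaf_first_schur.
Qed.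

Lemma leaf_rank_evalM l : \rank (evalM e l) = (\rank (evalM e' l)).+1.
Proof.
have evalC : row_perm p (col_perm p (evalM e l)) = map_mx (horner_eval l) C.
  by rewrite map_row_perm map_col_perm.
rewrite -(rank_conj_perm p) evalC rank_schur; last first.
  by rewrite -map_ulsubmx leaf_first_corner map_mx1.
by rewrite -map_schur_compl leaf_first_schur.
Qed.

Lemma leaf_geom_mult l : geom_mult e l = geom_mult e' l.
Proof. by rewrite /geom_mult !mxrank_ker !mxrank_tr leaf_rank_evalM subSS. Qed.

End ReciprocalLeaf.

Theorem theorem3p8 (n : nat) (e : rel 'I_n.+1) (i : 'I_n.+1) :
  irreflexive e -> reciprocal_leaf e i ->
  let e' := delete_vertex e i in
  (forall l : algC, finite_eigenvalue e l = finite_eigenvalue e' l) /\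
  (forall l : algC, finite_eigenvalue e l ->
     alg_mult e l = alg_mult e' l /\ geom_mult e l = geom_mult e' l).
Proof.
move=> irr_e [j [nji e_ij e_ji leaf]] e'.
have [j' def_j|j_i] := unliftP i j; last by rewrite j_i eqxx in nji.
rewrite {}def_j in e_ij e_ji leaf.
have same_charM := leaf_charM irr_e e_ij e_ji leaf.
split=> l; first by rewrite /finite_eigenvalue same_charM.
by rewrite /alg_mult same_charM (leaf_geom_mult irr_e e_ij e_ji leaf).
Qed.
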